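(* Let $(\mathcal{N},\mathcal{E})$ be a connected graph with $N$ nodes, $E$ edges and incidence matrix $\mathbf{B}$, with nodes numbered so that those outside a nonempty strict subset $\mathcal{N}_0\subset\mathcal{N}$ come first, and partition $\mathbf{B}^\top=[\mathbf{B}_1^\top~\mathbf{B}_0^\top]$ accordingly ($\mathbf{B}_0$ = rows indexed by $\mathcal{N}_0$). Let $w_e\in\mathbb{C}\setminus\{0\}$, $\mathbf{W}=\mathrm{diag}(\{w_e\}_{e\in\mathcal{E}})$, and let $\mathbf{P}$ be a real full-column-rank matrix with $\mathrm{range}(\mathbf{P})=\mathrm{null}(\mathbf{B}_0)$; assume $\mathbf{P}^\top\mathbf{W}\mathbf{P}$ and $\mathbf{B}_0\mathbf{W}^{-1}\mathbf{B}_0^\top$ are invertible (e.g. if $\mathrm{Re}(w_e)\ge0$, $\mathrm{Im}(w_e)\ge0$ for all $e$). Define the Laplacian $\widetilde{\mathbf{W}}=\mathbf{B}\mathbf{W}^{-1}\mathbf{B}^\top=\begin{bmatrix}\widetilde{\mathbf{W}}_{11}&\widetilde{\mathbf{W}}_{10}\\ \widetilde{\mathbf{W}}_{10}^\top&\widetilde{\mathbf{W}}_{00}\end{bmatrix}$, with $\widetilde{\mathbf{W}}_{00}$ the block indexed by $\mathcal{N}_0$. Then $$\mathbf{B}_1\mathbf{P}(\mathbf{P}^\top\mathbf{W}\mathbf{P})^{-1}\mathbf{P}^\top\mathbf{B}_1^\top=\widetilde{\mathbf{W}}\setminus\widetilde{\mathbf{W}}_{00}:=\widetilde{\mathbf{W}}_{11}-\widetilde{\mathbf{W}}_{10}\widetilde{\mathbf{W}}_{00}^{-1}\widetilde{\mathbf{W}}_{10}^\top.$$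 In particular, for edge resistances $r_e\ge0$, inductances $\ell_e>0$ and $\omega>0$, with $\mathbf{R}=\mathrm{diag}(\{r_e\})$, $\mathbf{L}=\mathrm{diag}(\{\ell_e\})$: (a) taking $\mathbf{W}=\mathbf{R}+\jmath\omega\mathbf{L}$ gives $\mathbf{B}_1\mathbf{P}(\mathbf{P}^\top(\mathbf{R}+\jmath\omega\mathbf{L})\mathbf{P})^{-1}\mathbf{P}^\top\mathbf{B}_1^\top=\mathbf{Y}_{11}-\mathbf{Y}_{10}\mathbf{Y}_{00}^{-1}\mathbf{Y}_{10}^\top$ (the Kron-reduced admittance matrix), where $\mathbf{Y}=\mathbf{B}(\mathbf{R}+\jmath\omega\mathbf{L})^{-1}\mathbf{B}^\top$ is partitioned in the same way; (b) taking $\mathbf{W}=\mathbf{L}$ gives $\mathbf{B}_1\mathbf{P}(\mathbf{P}^\top\mathbf{L}\mathbf{P})^{-1}\mathbf{P}^\top\mathbf{B}_1^\top=\widetilde{\mathbf{L}}_{11}-\widetilde{\mathbf{L}}_{10}\widetilde{\mathbf{L}}_{00}^{-1}\widetilde{\mathbf{L}}_{10}^\top$, where $\widetilde{\mathbf{L}}=\mathbf{B}\mathbf{L}^{-1}\mathbf{B}^\top$ is partitioned in the same way.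
   Context: Each edge is given an arbitrary orientation $e=(m,n)$. The incidence matrix $\mathbf{B}\in\{0,\pm1\}^{N\times E}$ has entries $B_{k,e}=1$ if $k=m$, $B_{k,e}=-1$ if $k=n$, for $e=(m,n)$, and $B_{k,e}=0$ otherwise. $^\top$ denotes the (non-conjugate) transpose and $\jmath=\sqrt{-1}$. *)

(* Complex numbers are R[i] (mathcomp-real-closed) over a
   real closed field R (the real numbers being the motivating instance). *)
From HB Require Import structures.
From mathcomp Require Import all_boot all_order all_algebra.
From mathcomp Require Export complex.
Set Implicit Arguments. Unset Strict Implicit. Unset Printing Implicit Defensive.
Import Order.TTheory GRing.Theory Num.Theory.
Local Open Scope ring_scope.

(* A graph on node set 'I_N with edge set 'I_E; edge e is oriented as
   e = (src e, dst e). *)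

Definition incidence (K : ringType) (N E : nat) (src dst : 'I_E -> 'I_N)
  : 'M[K]_(N, E) :=
  \matrix_(k < N, e < E)
    (if k == src e then 1 else if k == dst e then -1 else 0).

Definition simple_graph (N E : nat) (src dst : 'I_E -> 'I_N) : Prop :=
  (forall e, src e != dst e) /\
  (forall e e', (src e == src e' /\ dst e == dst e') \/
                (src e == dst e' /\ dst e == src e') -> e = e').

Definition adj (N E : nat) (src dst : 'I_E -> 'I_N) : rel 'I_N :=
  fun u v => [exists e, ((src e == u) && (dst e == v)) ||
                        ((src e == v) && (dst e == u))].

Definition graph_connected (N E : nat) (src dst : 'I_E -> 'I_N) : Prop :=
  forall u v : 'I_N, connect (adj src dst) u v.

(* Schur complement  A \ A_00 := A_11 - A_10 A_00^{-1} A_10^T  for the block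
   decomposition of A : 'M_(n1 + n0) (last n0 indices = N_0). *)
Definition schur_compl (K : comUnitRingType) (n1 n0 : nat)
  (A : 'M[K]_(n1 + n0)) : 'M[K]_n1 :=
  ulsubmx A - ursubmx A *m invmx (drsubmx A) *m (ursubmx A)^T.

Definition cplx (R : rcfType) (m n : nat) (A : 'M[R]_(m, n)) : 'M[R[i]]_(m, n) :=
  map_mx (fun x => x%:C%C) A.

From HB Require Import structures.
From mathcomp Require Import all_boot all_order all_algebra.
From mathcomp Require Import complex.
From mathcomp Require Import ring.
Import Order.TTheory GRing.Theory Num.Theory.
Set Implicit Arguments. Unset Strict Implicit. Unset Printing Implicit Defensive.
Local Open Scope ring_scope.

(* Let D := W^-1 - P (P^T W P)^-1 P^T - W^-1 B0^T (B0 W^-1 B0^T)^-1 B0 W^-1.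
   Then D B0^T = 0 and D W P = 0; the first puts every row of D in
   ker B0^T = range P^T, say y P^T, and the second gives y (P^T W P) = 0,
   so D = 0.  Sandwiching this decomposition of W^-1 between B1 and B1^T is
   exactly the Schur complement of B W^-1 B^T.
   In the special cases the weights lie in the closed first quadrant, so
   Re((1 - i) w_e) > 0 and Re((1 + i) / w_e) > 0: after this rotation the
   congruences P^T W P and B0 W^-1 B0^T of row-free real matrices are definite,
   hence invertible.  B0 is row free: a left null vector of B0, padded by zeros
   on N \ N0, is a left null vector of B, hence constant on the connected
   graph, hence zero since N \ N0 is nonempty. *)

Lemma invmx_kernel_decomposition (F : fieldType) E n0 k
    (B0 : 'M[F]_(n0, E)) (P : 'M_(E, k)) (W : 'M_E) :
  W \in unitmx -> B0 *m P = 0 -> (kermx B0^T <= P^T)%MS ->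
  P^T *m W *m P \in unitmx -> B0 *m invmx W *m B0^T \in unitmx ->
  P *m invmx (P^T *m W *m P) *m P^T
    + invmx W *m B0^T *m invmx (B0 *m invmx W *m B0^T) *m B0 *m invmx W
  = invmx W.
Proof.
move=> Wu B0P kerB0 Tu Su.
set T := P^T *m W *m P; set S := B0 *m invmx W *m B0^T.
set D := invmx W - (P *m invmx T *m P^T
                     + invmx W *m B0^T *m invmx S *m B0 *m invmx W).
suff D0 : D = 0 by apply/eqP; rewrite eq_sym -subr_eq0 -/D D0.
have PB0 : P^T *m B0^T = 0 by rewrite -trmx_mul B0P trmx0.
have DB0 : D *m B0^T = 0.
  by rewrite /D mulmxBl mulmxDl -!mulmxA PB0 (mulmxA B0) -/S mulVmx // !mulmx0 mulmx1 add0r subrr.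
have DWP : D *m (W *m P) = 0.
  rewrite /D mulmxBl mulmxDl -!mulmxA mulKmx // B0P !mulmx0 addr0.
  by rewrite (mulmxA P^T) -/T mulVmx // mulmx1 subrr.
apply/row_matrixP => i; rewrite row0.
have rDWP : row i D *m (W *m P) = 0 by rewrite -row_mul DWP row0.
have /submxP [y rD] : (row i D <= P^T)%MS.
  by apply: submx_trans kerB0; apply/sub_kermxP; rewrite -row_mul DB0 row0.
rewrite rD in rDWP *.
have yT : y *m T = 0 by rewrite /T -rDWP !mulmxA.
by rewrite -(mulmxK Tu y) yT !mul0mx.
Qed.

Lemma schur_compl_congr (K : comUnitRingType) n1 n0 E
    (B1 : 'M[K]_(n1, E)) (B0 : 'M_(n0, E)) (M : 'M_E) :
  M^T = M ->
  schur_compl (col_mx B1 B0 *m M *m (col_mx B1 B0)^T)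
    = B1 *m (M - M *m B0^T *m invmx (B0 *m M *m B0^T) *m B0 *m M) *m B1^T.
Proof.
move=> MT; rewrite /schur_compl tr_col_mx mul_col_mx mul_col_row.
rewrite block_mxKul block_mxKur block_mxKdr !trmx_mul trmxK MT.
by rewrite mulmxBr mulmxBl !mulmxA.
Qed.

Lemma kron_reduction (F : fieldType) n1 n0 E k
    (B1 : 'M[F]_(n1, E)) (B0 : 'M_(n0, E)) (P : 'M_(E, k)) (W : 'M_E) :
  W \in unitmx -> W^T = W -> B0 *m P = 0 -> (kermx B0^T <= P^T)%MS ->
  P^T *m W *m P \in unitmx -> B0 *m invmx W *m B0^T \in unitmx ->
  B1 *m P *m invmx (P^T *m W *m P) *m P^T *m B1^T
    = schur_compl (col_mx B1 B0 *m invmx W *m (col_mx B1 B0)^T).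
Proof.
move=> Wu WT B0P kerB0 Tu Su.
rewrite schur_compl_congr ?trmx_inv ?WT //.
have := invmx_kernel_decomposition Wu B0P kerB0 Tu Su.
by move/(canRL (addrK _)) <-; rewrite !mulmxA.
Qed.

Lemma diag_mx_unit (F : fieldType) n (w : 'rV[F]_n) :
  (forall e, w 0 e != 0) -> diag_mx w \in unitmx.
Proof. by move=> w0; rewrite unitmxE det_diag unitfE; apply/prodf_neq0. Qed.

Lemma invmx_diag (F : fieldType) n (w : 'rV[F]_n) :
  (forall e, w 0 e != 0) -> invmx (diag_mx w) = diag_mx (map_mx GRing.inv w).
Proof.
move=> w0; rewrite -[RHS](mulKmx (diag_mx_unit w0)) mulmx_diag.
suff -> : \row_j (w 0 j * map_mx GRing.inv w 0 j) = const_mx 1.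
  by rewrite diag_const_mx mulmx1.
by apply/rowP => j; rewrite !mxE mulfV.
Qed.

Lemma mulmx_incidence (K : nzRingType) N E (src dst : 'I_E -> 'I_N)
    (z : 'rV[K]_N) e :
  src e != dst e -> (z *m incidence K src dst) 0 e = z 0 (src e) - z 0 (dst e).
Proof.
move=> loopfree; rewrite !mxE (bigD1 (src e)) //= (bigD1 (dst e)) 1?eq_sym //=.
rewrite big1 => [|j /andP [jd js]]; last by rewrite mxE (negbTE jd) (negbTE js) mulr0.
by rewrite !mxE eqxx eq_sym (negbTE loopfree) eqxx mulr1 mulrN1 addr0.
Qed.

Lemma incidence_left_kernel_const (K : nzRingType) N E (src dst : 'I_E -> 'I_N)
    (z : 'rV[K]_N) :
  (forall e, src e != dst e) -> graph_connected src dst ->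
  z *m incidence K src dst = 0 -> forall u v, z 0 u = z 0 v.
Proof.
move=> loopfree conn zB u v.
have edge_eq e : z 0 (src e) = z 0 (dst e).
  by apply/eqP; rewrite -subr_eq0 -mulmx_incidence // zB mxE.
have closed_level : closed (adj src dst) [pred x | z 0 x == z 0 u].
  by move=> x y /existsP [e /orP [] /andP [/eqP <- /eqP <-]]; rewrite !inE edge_eq.
by apply/esym/eqP; rewrite -[_ == _]/(v \in [pred x | z 0 x == z 0 u])
  -(closed_connect closed_level (conn u v)) inE.
Qed.

Lemma incidence_dsubmx_row_free (F : fieldType) n1 n0 E
    (src dst : 'I_E -> 'I_(n1 + n0)) :
  (0 < n1)%N -> (forall e, src e != dst e) -> graph_connected src dst ->
  row_free (dsubmx (incidence F src dst)).
Proof.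
move=> n1_gt0 loopfree conn; apply: inj_row_free => u uB0.
set z := row_mx (0 : 'rV[F]_n1) u.
have zB : z *m incidence F src dst = 0.
  by rewrite -[incidence _ _ _]vsubmxK mul_row_col mul0mx add0r uB0.
apply/rowP => j; rewrite mxE.
have := incidence_left_kernel_const loopfree conn zB (lshift n0 (Ordinal n1_gt0)) (rshift n1 j).
by rewrite /z row_mxEl row_mxEr mxE.
Qed.

Lemma map_incidence (K L : nzRingType) (f : {rmorphism K -> L}) N E
    (src dst : 'I_E -> 'I_N) :
  map_mx f (incidence K src dst) = incidence L src dst.
Proof.
apply/matrixP => i j; rewrite !mxE.
by case: ifP => _; [|case: ifP => _]; rewrite ?rmorphN1 ?rmorph1 ?rmorph0.
Qed.

Lemma range_null_mulmx_eq0 (F : fieldType) m n k (A : 'M[F]_(m, n)) (P : 'M_(n, k)) :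
  (forall x : 'cV_n, (exists y, x = P *m y) <-> A *m x = 0) -> A *m P = 0.
Proof.
move=> rangeP; apply/matrixP => i j.
have /rangeP : exists y, P *m delta_mx j (0 : 'I_1) = P *m y by exists (delta_mx j 0).
by rewrite mulmxA -colE => /matrixP/(_ i 0); rewrite !mxE.
Qed.

Lemma range_null_kermx_sub (F : fieldType) m n k (A : 'M[F]_(m, n)) (P : 'M_(n, k)) :
  (forall x : 'cV_n, (exists y, x = P *m y) <-> A *m x = 0) ->
  (kermx A^T <= P^T)%MS.
Proof.
move=> rangeP; apply/row_subP => i.
have : A *m (row i (kermx A^T))^T = 0.
  by rewrite -[A in A *m _]trmxK -trmx_mul -row_mul mulmx_ker row0 trmx0.
by move/rangeP => [y yP]; rewrite -[row i _]trmxK yP trmx_mul submxMl.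
Qed.

Section ComplexWeights.
Variable R : rcfType.
Local Notation C := R[i].

Lemma cplxE m n (A : 'M[R]_(m, n)) : cplx A = map_mx (real_complex R) A.
Proof. by []. Qed.

Lemma cplx_conj m n (A : 'M[R]_(m, n)) : map_mx conjc (cplx A) = cplx A.
Proof. by apply/matrixP => i j; rewrite !mxE conjc_real. Qed.

Lemma diag_form_eq0 n (c : C) (w v : 'rV[C]_n) :
  (forall e, 0 < complex.Re (c * w 0 e)) ->
  v *m diag_mx w *m (map_mx conjc v)^T = 0 -> v = 0.
Proof.
move=> cw vwv.
have Re_term e : complex.Re (c * (v 0 e * w 0 e * (v 0 e)^*%C))
    = complex.Re (c * w 0 e) * (complex.Re (v 0 e) ^+ 2 + complex.Im (v 0 e) ^+ 2).
  have -> : c * (v 0 e * w 0 e * (v 0 e)^*%C) = c * w 0 e * (v 0 e * (v 0 e)^*%C).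
    by ring.
  by move: (c * w 0 e) (v 0 e) => [p q] [a b] /=; rewrite !expr2; ring.
have : \sum_e complex.Re (c * w 0 e)
          * (complex.Re (v 0 e) ^+ 2 + complex.Im (v 0 e) ^+ 2) = 0.
  transitivity (complex.Re (c * (v *m diag_mx w *m (map_mx conjc v)^T) 0 0)).
    rewrite mul_mx_diag mxE mulr_sumr raddf_sum.
    by apply: eq_bigr => e _; rewrite !mxE; exact: esym (Re_term e).
  by rewrite vwv mxE mulr0.
move/psumr_eq0P => terms0; apply/rowP => e; rewrite mxE.
have /eqP : complex.Re (c * w 0 e)
            * (complex.Re (v 0 e) ^+ 2 + complex.Im (v 0 e) ^+ 2) = 0.
  apply: terms0 => // i _; apply: mulr_ge0; first exact: ltW.
  by rewrite addr_ge0 ?sqr_ge0.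
rewrite mulf_eq0 (gt_eqF (cw e)) /= paddr_eq0 ?sqr_ge0 // !sqrf_eq0.
by case: (v 0 e) => a b /= /andP [/eqP -> /eqP ->].
Qed.

Lemma cplx_congr_diag_unit m n (A : 'M[R]_(m, n)) (c : C) (w : 'rV[C]_n) :
  row_free A -> (forall e, 0 < complex.Re (c * w 0 e)) ->
  cplx A *m diag_mx w *m (cplx A)^T \in unitmx.
Proof.
move=> freeA cw; rewrite -row_free_unit; apply: inj_row_free => u uM.
have freeAc : row_free (cplx A) by rewrite cplxE row_free_map.
apply: (row_free_inj freeAc); rewrite mul0mx; apply: (diag_form_eq0 cw).
rewrite map_mxM cplx_conj trmx_mul !mulmxA.
have -> : u *m cplx A *m diag_mx w *m (cplx A)^T = 0 by rewrite -uM !mulmxA.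
by rewrite mul0mx.
Qed.

Definition first_quadrant (z : C) :=
  [&& 0 <= complex.Re z, 0 <= complex.Im z & z != 0].

Lemma first_quadrant_neq0 (z : C) : first_quadrant z -> z != 0.
Proof. by case/and3P. Qed.

Lemma Re_mul_1Ni_gt0 (z : C) : first_quadrant z -> 0 < complex.Re ((1 - 'i%C) * z).
Proof.
case: z => a b /and3P [/= a_ge0 b_ge0 z_neq0]; simpc.
rewrite lt_def addr_ge0 // andbT paddr_eq0 //.
by apply: contra z_neq0 => /andP [/eqP -> /eqP ->].
Qed.

Lemma Re_mul_1i_inv_gt0 (z : C) : first_quadrant z -> 0 < complex.Re ((1 + 'i%C) * z^-1).
Proof.
move=> zq; have := Re_mul_1Ni_gt0 zq.
case: z zq => a b /and3P [/= a_ge0 b_ge0 _]; simpc => ab_gt0.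
rewrite -mulrDl divr_gt0 // lt_def addr_ge0 ?sqr_ge0 // andbT.
rewrite paddr_eq0 ?sqr_ge0 // !sqrf_eq0.
by apply: contraTN ab_gt0 => /andP [/eqP -> /eqP ->]; rewrite addr0 ltxx.
Qed.

Lemma first_quadrant_congr_unit m n (A : 'M[R]_(m, n)) (w : 'rV[C]_n) :
  row_free A -> (forall e, first_quadrant (w 0 e)) ->
  cplx A *m diag_mx w *m (cplx A)^T \in unitmx.
Proof.
by move=> freeA wq; apply: cplx_congr_diag_unit freeA _ => e; exact: Re_mul_1Ni_gt0.
Qed.

Lemma first_quadrant_congr_inv_unit m n (A : 'M[R]_(m, n)) (w : 'rV[C]_n) :
  row_free A -> (forall e, first_quadrant (w 0 e)) ->
  cplx A *m invmx (diag_mx w) *m (cplx A)^T \in unitmx.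
Proof.
move=> freeA wq; rewrite invmx_diag => [|e]; last exact/first_quadrant_neq0.
by apply: cplx_congr_diag_unit freeA _ => e; rewrite mxE; exact: Re_mul_1i_inv_gt0.
Qed.

Lemma cplx_kron_reduction n1 n0 E k (B1 : 'M[C]_(n1, E)) (B0 : 'M[R]_(n0, E))
    (P : 'M[R]_(E, k)) (W : 'M[C]_E) :
  (forall x : 'cV_E, (exists y, x = P *m y) <-> B0 *m x = 0) ->
  W \in unitmx -> W^T = W ->
  (cplx P)^T *m W *m cplx P \in unitmx ->
  cplx B0 *m invmx W *m (cplx B0)^T \in unitmx ->
  B1 *m cplx P *m invmx ((cplx P)^T *m W *m cplx P) *m (cplx P)^T *m B1^T
    = schur_compl (col_mx B1 (cplx B0) *m invmx W *m (col_mx B1 (cplx B0))^T).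
Proof.
move=> rangeP Wu WT Tu Su; apply: kron_reduction => //.
  by rewrite !cplxE -map_mxM (range_null_mulmx_eq0 rangeP) map_mx0.
by rewrite !cplxE !map_trmx -map_kermx map_submx (range_null_kermx_sub rangeP).
Qed.

Lemma cplx_diag_mx n (d : 'rV[R]_n) : cplx (diag_mx d) = diag_mx (cplx d).
Proof. by rewrite !cplxE map_diag_mx. Qed.

Lemma cplx_impedance_diag n (r l : 'rV[R]_n) (omega : R) :
  cplx (diag_mx r) + ('i%C * omega%:C%C) *: cplx (diag_mx l)
    = diag_mx (\row_e (r 0 e +i* (omega * l 0 e))%C).
Proof.
apply/matrixP => i j; rewrite !mxE.
by case: (i == j); rewrite ?mulr1n ?mulr0n; simpc.
Qed.

Lemma first_quadrant_Im_gt0 (a b : R) : 0 <= a -> 0 < b -> first_quadrant (a +i* b)%C.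
Proof.
move=> a_ge0 b_gt0; rewrite /first_quadrant eq_complex /= a_ge0 (ltW b_gt0).
by rewrite negb_and (gt_eqF b_gt0) orbT.
Qed.

Lemma first_quadrant_real_gt0 (a : R) : 0 < a -> first_quadrant a%:C%C.
Proof.
move=> a_gt0; rewrite /first_quadrant eq_complex /= (ltW a_gt0) lexx.
by rewrite negb_and (gt_eqF a_gt0).
Qed.

End ComplexWeights.

Theorem proposition1
  (R : rcfType) (n1 n0 E : nat)
  (src dst : 'I_E -> 'I_(n1 + n0))
  (hn1 : (0 < n1)%N) (hn0 : (0 < n0)%N)
  (hsimple : simple_graph src dst)
  (hconn : graph_connected src dst)
  (k : nat) (P : 'M[R]_(E, k))
  (hrank : \rank P = k)
  (hrange : forall x : 'cV[R]_E,
      (exists y : 'cV[R]_k, x = P *m y) <->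
      dsubmx (incidence R src dst) *m x = 0) :
  let B := incidence R[i] src dst in
  let B1 := usubmx B in
  let B0 := dsubmx B in
  let Pc := cplx P in
  (forall w : 'rV[R[i]]_E,
     (forall e, w 0 e != 0) ->
     let W := diag_mx w in
     (Pc^T *m W *m Pc) \in unitmx ->
     (B0 *m invmx W *m B0^T) \in unitmx ->
     B1 *m Pc *m invmx (Pc^T *m W *m Pc) *m Pc^T *m B1^T
       = schur_compl (B *m invmx W *m B^T))
  /\
  (forall (r l : 'rV[R]_E) (omega : R),
     (forall e, 0 <= r 0 e) -> (forall e, 0 < l 0 e) -> 0 < omega ->
     let Rm := cplx (diag_mx r) in
     let Lm := cplx (diag_mx l) in
     let Z := Rm + ('i%C * (omega%:C)%C) *: Lm in
     (B1 *m Pc *m invmx (Pc^T *m Z *m Pc) *m Pc^T *m B1^T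
        = schur_compl (B *m invmx Z *m B^T))
     /\
     (B1 *m Pc *m invmx (Pc^T *m Lm *m Pc) *m Pc^T *m B1^T
        = schur_compl (B *m invmx Lm *m B^T))).
Proof.
move=> B B1 B0 Pc.
set B0R := dsubmx (incidence R src dst).
have B0E : B0 = cplx B0R.
  by rewrite /B0 /B -(map_incidence (real_complex R)) -map_dsubmx.
have BE : B = col_mx B1 (cplx B0R) by rewrite -B0E vsubmxK.
have kron (w : 'rV_E) : (forall e, w 0 e != 0) ->
    Pc^T *m diag_mx w *m Pc \in unitmx ->
    B0 *m invmx (diag_mx w) *m B0^T \in unitmx ->
    B1 *m Pc *m invmx (Pc^T *m diag_mx w *m Pc) *m Pc^T *m B1^T
      = schur_compl (B *m invmx (diag_mx w) *m B^T).
  move=> w0; rewrite BE B0E.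
  exact: cplx_kron_reduction hrange (diag_mx_unit w0) (tr_diag_mx w).
have Pfree : row_free P^T by rewrite /row_free mxrank_tr hrank.
have B0free : row_free B0R.
  exact: incidence_dsubmx_row_free hn1 hsimple.1 hconn.
have quadrant (w : 'rV_E) : (forall e, first_quadrant (w 0 e)) ->
    B1 *m Pc *m invmx (Pc^T *m diag_mx w *m Pc) *m Pc^T *m B1^T
      = schur_compl (B *m invmx (diag_mx w) *m B^T).
  move=> wq; apply: kron => [e||]; first exact/first_quadrant_neq0.
    by have := first_quadrant_congr_unit Pfree wq; rewrite !cplxE -map_trmx trmxK.
  by rewrite B0E; apply: first_quadrant_congr_inv_unit B0free wq.
split=> [w w0 W|r l omega r_ge0 l_gt0 omega_gt0 Rm Lm Z]; first exact: kron.
rewrite /Z /Rm /Lm cplx_impedance_diag cplx_diag_mx.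
split; apply: quadrant => e; rewrite mxE.
  by apply: first_quadrant_Im_gt0; rewrite ?mulr_gt0.
exact: first_quadrant_real_gt0.
Qed.
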